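(* Let $(\mathcal F,d)$ be a metric space, $\Sigma=(\Sigma_M)_{M\in\mathbb N}$ a sequence of non-empty subsets of $\mathcal F$ and $\mathcal C\subset\mathcal F$ non-empty. If $\Sigma$ is $\gamma$-encodable for every $\gamma<\gamma^*(\mathcal C|\Sigma)$ (with $\gamma>0$), then $\gamma^*(\mathcal C|\Sigma)\le\gamma^*_e(\mathcal C)$.
   Context: Approximation speed: $\gamma^*(\mathcal C|\Sigma)=\sup\{\gamma\in\mathbb R:\sup_{f\in\mathcal C}\inf_{\Phi\in\Sigma_M}d(f,\Phi)=O(M^{-\gamma})\text{ as }M\to\infty\}\in[-\infty,\infty]$ ($\sup\emptyset=-\infty$). A finite $X\subset\mathcal C$ is an $\varepsilon$-covering of $\mathcal C$ if every point of $\mathcal C$ is within distance $\varepsilon$ of some point of $X$; $N(\mathcal C,d,\varepsilon)$ is the minimal size of such a covering ($+\infty$ if none), $H=\log_2N$, and $\gamma^*_e(\mathcal C)=\sup\{\gamma>0:H(\mathcal C,d,\varepsilon)=O(\varepsilon^{-1/\gamma})\text{ as }\varepsilon\to0\}$ ($0$ if empty). For $\gamma,h>0$, a $(\gamma,h)$-encoding of $\Sigma$ is a sequence $(\Sigma(\gamma,h)_M)_M$ such that for some $c_1,c_2>0$ and all $M$, $\Sigma(\gamma,h)_M$ is a $c_1M^{-\gamma}$-covering of $\Sigma_M$ with $\log_2|\Sigma(\gamma,h)_M|\le c_2M^{1+h}$. $\Sigma$ is $\gamma$-encodable if it admits a $(\gamma,h)$-encoding for every $h>0$. *)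

From HB Require Import structures.
From mathcomp Require Import all_boot all_order all_algebra.
From mathcomp Require Import all_classical all_reals all_analysis.
Set Implicit Arguments. Unset Strict Implicit. Unset Printing Implicit Defensive.
Import Order.TTheory GRing.Theory Num.Theory.
Local Open Scope classical_set_scope.
Local Open Scope ring_scope.

Section Defs.
Variables (R : realType) (T : Type) (d : T -> T -> R).

Definition is_metric : Prop :=
  [/\ forall x y, d x y = 0 <-> x = y,
      forall x y, d x y = d y x &
      forall x y z, d x z <= d x y + d y z].

(* X : 'I_n -> T lists (with possible repetitions) an eps-covering of A,
   X consisting of points of A. *)
Definition is_covering (A : set T) (eps : R) (n : nat) (X : 'I_n -> T) : Prop :=
  (forall i, A (X i)) /\ (forall x, A x -> exists i, d x (X i) <= eps).

(* covering number N(A,d,eps) in \bar R (+oo if no finite covering) *)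
Definition covering_number (A : set T) (eps : R) : \bar R :=
  ereal_inf [set ((n%:R : R)%:E) | n in
             [set n : nat | exists X : 'I_n -> T, is_covering A eps X]].

Definition entropy (A : set T) (eps : R) : \bar R :=
  match covering_number A eps with
  | EFin x => (ln x / ln 2)%:E
  | +oo%E => +oo%E
  | -oo%E => -oo%E
  end.

Definition entropy_rate (C : set T) : \bar R :=
  ereal_sup ([set (g%:E) | g in
     [set g : R | 0 < g /\ exists c eps0 : R, 0 < eps0 /\
        forall eps, 0 < eps -> eps < eps0 ->
          (entropy C eps <= (c * powR eps (- (1 / g)))%:E)%E]]
   `|` [set 0%E]).

Definition approx_error (C : set T) (S : set T) : \bar R :=
  ereal_sup [set ereal_inf [set ((d f p)%:E) | p in S] | f in C].

Definition approx_speed (C : set T) (Sigma : nat -> set T) : \bar R :=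
  ereal_sup [set (g%:E) | g in
    [set g : R | exists (c : R) (M0 : nat), forall M : nat, (0 < M)%N -> (M0 <= M)%N ->
        (approx_error C (Sigma M) <= (c * powR (M%:R) (- g))%:E)%E]].

Definition has_encoding (Sigma : nat -> set T) (g h : R) : Prop :=
  exists (n : nat -> nat) (X : forall M : nat, 'I_(n M) -> T) (c1 c2 : R),
    0 < c1 /\ 0 < c2 /\
    forall M : nat, (0 < M)%N ->
      is_covering (Sigma M) (c1 * powR (M%:R) (- g)) (X M) /\
      ln ((n M)%:R) / ln 2 <= c2 * powR (M%:R) (1 + h).

Definition encodable (Sigma : nat -> set T) (g : R) : Prop :=
  forall h : R, 0 < h -> has_encoding Sigma g h.

End Defs.

(* Let C be approximated by Sigma_M at rate M^-g and let Sigma be (gam, h)-encodable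
   for some gam < g.  Up to a constant, the encoding points of Sigma_M, moved into C,
   cover C at scale M^-gam with 2^(c M^(1+h)) points; taking M ~ eps^(-1/gam) gives
   H(C, eps) = O(eps^(-(1+h)/gam)).  For s < gam the choice h = gam/s - 1 turns this
   exponent into 1/s, so gamma*_e(C) >= s for every s < gamma*(C|Sigma). *)

From HB Require Import structures.
From mathcomp Require Import all_boot all_order all_algebra.
From mathcomp Require Import all_classical all_reals all_analysis.
From mathcomp Require Import unstable lra.
Set Implicit Arguments. Unset Strict Implicit. Unset Printing Implicit Defensive.
Import Order.TTheory GRing.Theory Num.Theory.
Local Open Scope classical_set_scope.
Local Open Scope ring_scope.

Section Coverings.
Variables (R : realType) (T : Type) (d : T -> T -> R).

Lemma entropy_le_log2 (A : set T) (e eps : R) (n : nat) (X : 'I_n -> T) :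
  A !=set0 -> is_covering d A e X -> e <= eps ->
  (entropy d A eps <= (ln n%:R / ln 2)%:E)%E.
Proof.
move=> [a Aa] [XA Xcov] le_e_eps.
have covX : is_covering d A eps X.
  split=> // x Ax; have [i hi] := Xcov x Ax; exists i; exact: le_trans hi le_e_eps.
have N_le_n : (covering_number d A eps <= n%:R%:E)%E.
  by apply: ereal_inf_lbound; exists n => //; exists X.
have N_ge1 : (1%:E <= covering_number d A eps)%E.
  apply: le_ereal_inf_tmp => _ [[|m] [Y [_ HY]] <-]; last by rewrite lee_fin ler1n.
  by have [[]] := HY a Aa.
rewrite /entropy; move: N_le_n N_ge1.
case: (covering_number d A eps) => [N| |] //; rewrite !lee_fin => N_le_n N_ge1.
rewrite ler_pM2r ?invr_gt0 ?ln_gt0 ?ltr1n // ler_ln // posrE; lra.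
Qed.

Hypothesis d_metric : is_metric d.

Lemma covering_of_centers (A : set T) (r : R) (n : nat) (Y : 'I_n -> T) :
  A !=set0 -> (forall x, A x -> exists i, d x (Y i) <= r) ->
  exists X : 'I_n -> T, is_covering d A (2 * r) X.
Proof.
move=> [a Aa] Ycov; have [_ d_sym d_tri] := d_metric.
(* Replace each center by a point of [A] within [r] of it, if there is one. *)
have near_center i : exists x, A x /\
    ((exists z, A z /\ d z (Y i) <= r) -> d x (Y i) <= r).
  case: (pselect (exists z, A z /\ d z (Y i) <= r)) => [[z [Az hz]]|no_z].
    by exists z.
  by exists a; split=> // near; case: no_z.
have [X HX] := choice near_center.
exists X; split=> [i|x Ax]; first by case: (HX i).
have [i hi] := Ycov x Ax; exists i.
have := (HX i).2 (ex_intro _ x (conj Ax hi)).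
have := d_tri x (Y i) (X i); rewrite (d_sym (Y i)); lra.
Qed.

Lemma approx_error_covering (C S : set T) (e r : R) (n : nat) (X : 'I_n -> T) :
  (approx_error d C S < e%:E)%E -> is_covering d S r X ->
  forall f, C f -> exists i, d f (X i) <= e + r.
Proof.
move=> err_lt [_ Xcov] f Cf; have [_ _ d_tri] := d_metric.
have inf_lt : (ereal_inf [set (d f p)%:E | p in S] < e%:E)%E.
  by apply: le_lt_trans err_lt; apply: ereal_sup_ubound; exists f.
have [_ [p Sp <-]] := ereal_inf_lt inf_lt; rewrite lte_fin => dfp.
have [i dpX] := Xcov p Sp; exists i.
have := d_tri f p (X i); lra.
Qed.

Lemma entropy_le_of_approx (C S : set T) (e r eps : R) (n : nat) (X : 'I_n -> T) :
  C !=set0 -> (approx_error d C S < e%:E)%E -> is_covering d S r X ->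
  2 * (e + r) <= eps -> (entropy d C eps <= (ln n%:R / ln 2)%:E)%E.
Proof.
move=> C0 err_lt covX le_eps.
have [Y covY] := covering_of_centers C0 (approx_error_covering err_lt covX).
exact: entropy_le_log2 C0 covY le_eps.
Qed.

End Coverings.

Section Scales.
Variable R : realType.

Lemma nat_scale_le (gam K eps : R) (M0 : nat) :
  0 < gam -> 0 < K -> 0 < eps -> eps < K / powR M0.+1%:R gam ->
  exists M : nat, [/\ (0 < M)%N, (M0 <= M)%N, K * powR M%:R (- gam) <= eps &
                      M%:R <= 2 * powR (K / eps) gam^-1].
Proof.
move=> gam0 K0 eps0 eps_small.
set t := powR (K / eps) gam^-1.
have t0 : 0 <= t by apply: powR_ge0.
have tK : powR t gam = K / eps.
  by rewrite -powRrM mulVf ?gt_eqF // powRr1 // divr_ge0 ?ltW.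
have M0_lt_t : M0.+1%:R < t.
  rewrite ltNge; apply/negP => t_le.
  have := ge0_ler_powR (ltW gam0) t0 _ t_le; rewrite tK nnegrE ler0n => /(_ isT).
  by rewrite ler_pdivrMr // mulrC -ler_pdivrMr ?powR_gt0 ?ltr0n // leNgt eps_small.
have /andP[trunc_le t_lt] := truncn_itv t0.
exists (Num.truncn t).+1; split=> //.
- have : M0.+1%:R < (Num.truncn t).+1%:R :> R by apply: lt_trans M0_lt_t t_lt.
  by rewrite ltr_nat => /ltnW/ltnW.
- have Mgam_gt0 : 0 < powR (Num.truncn t).+1%:R gam by rewrite powR_gt0 ?ltr0n.
  rewrite powRN ler_pdivrMr // mulrC -ler_pdivrMr // -tK.
  by apply: ge0_ler_powR; rewrite ?nnegrE ?ler0n ?(ltW gam0) ?(ltW t_lt).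
- have : 1 <= t by apply: le_trans (ltW M0_lt_t); rewrite ler1n.
  rewrite -natr1; lra.
Qed.

Lemma powR_bound_of_nat_scales (E : R -> \bar R) (gam p K c : R) (M0 : nat) :
  0 < gam -> 0 <= p -> 0 < K -> 0 <= c ->
  (forall M : nat, (0 < M)%N -> (M0 <= M)%N ->
     forall eps, K * powR M%:R (- gam) <= eps -> (E eps <= (c * powR M%:R p)%:E)%E) ->
  exists c' eps0 : R, 0 < eps0 /\ forall eps, 0 < eps -> eps < eps0 ->
     (E eps <= (c' * powR eps (- (p / gam)))%:E)%E.
Proof.
move=> gam0 p0 K0 c0 E_bound.
exists (c * powR 2 p * powR K (p / gam)), (K / powR M0.+1%:R gam).
split=> [|eps eps0 eps_small]; first by rewrite divr_gt0 ?powR_gt0 ?ltr0n.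
have [M [M_gt0 M0_le_M scale_le M_le]] := nat_scale_le gam0 K0 eps0 eps_small.
apply: (le_trans (E_bound M M_gt0 M0_le_M eps scale_le)); rewrite lee_fin -!mulrA.
apply: ler_wpM2l => //.
have -> : powR K (p / gam) * powR eps (- (p / gam)) = powR (powR (K / eps) gam^-1) p.
  rewrite -powRrM [gam^-1 * p]mulrC powRM ?invr_ge0 ?ltW //.
  by rewrite -(powR_inv1 (ltW eps0)) -powRrM mulN1r.
rewrite -powRM ?powR_ge0 //.
by apply: ge0_ler_powR; rewrite ?nnegrE ?ler0n ?mulr_ge0 ?powR_ge0.
Qed.

End Scales.

Section Encoding.
Variables (R : realType) (T : Type) (d : T -> T -> R).
Hypothesis d_metric : is_metric d.

Lemma entropy_rate_ge_of_encoding (Sigma : nat -> set T) (C : set T)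
    (g gam s c : R) (M0 : nat) :
  C !=set0 -> 0 < s -> s < gam -> gam < g ->
  (forall M : nat, (0 < M)%N -> (M0 <= M)%N ->
     (approx_error d C (Sigma M) <= (c * powR M%:R (- g))%:E)%E) ->
  has_encoding d Sigma gam (gam / s - 1) ->
  (s%:E <= entropy_rate d C)%E.
Proof.
move=> C0 s0 s_gam gam_g approx [n [X [c1 [c2 [c1_gt0 [c2_gt0 encX]]]]]].
have gam0 : 0 < gam by lra.
pose K := 2 * (`|c| + c1 + 1).
have K0 : 0 < K by rewrite /K; have := normr_ge0 c; lra.
have entropy_at_scale (M : nat) : (0 < M)%N -> (M0 <= M)%N ->
    forall eps, K * powR M%:R (- gam) <= eps ->
    (entropy d C eps <= (c2 * powR M%:R (gam / s))%:E)%E.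
  move=> M_gt0 M0_le_M eps scale_le.
  have [covX logn_le] := encX M M_gt0.
  have err_le := approx M M_gt0 M0_le_M.
  set a := powR M%:R (- g) in err_le; set b := powR M%:R (- gam) in covX scale_le.
  have b0 : 0 < b by rewrite powR_gt0 ?ltr0n.
  have ca_le : c * a <= `|c| * b.
    have ab : a <= b by apply: ler_powR; rewrite ?ler1n //; lra.
    apply: le_trans (ler_wpM2l (normr_ge0 c) ab).
    by apply: ler_wpM2r (ler_norm c); apply: powR_ge0.
  have err_lt : (approx_error d C (Sigma M) < (c * a + b)%:E)%E.
    by apply: le_lt_trans err_le _; rewrite lte_fin; lra.
  apply: le_trans (entropy_le_of_approx d_metric C0 err_lt covX _) _.
    by apply: le_trans scale_le; rewrite /K; nra.
  by rewrite lee_fin (le_trans logn_le) // addrC subrK.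
have [c' [eps0 [eps0_gt0 entropy_le]]] :=
  powR_bound_of_nat_scales gam0 (ltW (divr_gt0 gam0 s0)) K0 (ltW c2_gt0)
    entropy_at_scale.
apply: ereal_sup_ubound; left; exists s => //; split=> //.
exists c', eps0; split=> // eps eps_gt0 eps_lt.
have -> : 1 / s = gam / s / gam by rewrite mulrAC divff ?gt_eqF.
exact: entropy_le.
Qed.

End Encoding.

Lemma ge0_lee_fin_of_lt (R : realType) (g : R) (y : \bar R) :
  (0 <= y)%E -> (forall s, 0 < s -> s < g -> (s%:E <= y)%E) -> (g%:E <= y)%E.
Proof.
case: y => [r| |] // r0 le_y; last exact: leey.
rewrite lee_fin; apply/ler_ltP => z z_g.
case: (leP z 0) => [z0|z0]; first by apply: le_trans z0 _; rewrite -lee_fin.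
by rewrite -lee_fin; apply: le_y.
Qed.

Theorem mainTheorem10 (R : realType) (T : Type) (d : T -> T -> R)
  (Sigma : nat -> set T) (C : set T) :
  is_metric d ->
  (forall M : nat, Sigma M !=set0) ->
  C !=set0 ->
  (forall g : R, 0 < g -> (g%:E < approx_speed d C Sigma)%E -> encodable d Sigma g) ->
  (approx_speed d C Sigma <= entropy_rate d C)%E.
Proof.
move=> d_metric _ C0 encodable_below.
have rate_ge0 : (0 <= entropy_rate d C)%E by apply: ereal_sup_ubound; right.
apply: ge_ereal_sup => _ [g [c [M0 approx]] <-].
have g_le_speed : (g%:E <= approx_speed d C Sigma)%E.
  by apply: ereal_sup_ubound; exists g => //; exists c, M0.
apply: ge0_lee_fin_of_lt rate_ge0 _ => s s0 s_g.
pose gam := (s + g) / 2.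
have s_gam : s < gam by rewrite /gam; lra.
have gam_g : gam < g by rewrite /gam; lra.
have gam_lt_speed : (gam%:E < approx_speed d C Sigma)%E.
  by apply: lt_le_trans g_le_speed; rewrite lte_fin.
have h_gt0 : 0 < gam / s - 1 by rewrite subr_gt0 ltr_pdivlMr // mul1r.
apply: (entropy_rate_ge_of_encoding d_metric C0 s0 s_gam gam_g approx).
exact: encodable_below gam (lt_trans s0 s_gam) gam_lt_speed _ h_gt0.
Qed.
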